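(* Under any feasible prescription strategy, the local state $X_t^1$ and the local mode $M_t^1$ are conditionally independent given the common information $H_t^0$.
   Context: Two-plant switched linear system $X_{t+1}=A(M_t^{0:1})X_t+B(M_t^{0:1})U_t+W_t$, $t=0,\dots,T$, with global/local states $X_t^0,X_t^1$, global/local modes $M_t^0,M_t^1$ (finite sets), actions $U_t^0,U_t^1$; the random variables $X_0^n$, $W_t^n$, $M_t^n$ ($n=0,1$, all $t$) are mutually independent (in particular the modes are independent over time and of each other). Packet-drop indicator $\Gamma_t$ i.i.d. Bernoulli, independent of everything else; $Z_t=X_t^1$, $\tilde Z_t=M_t^1$ if $\Gamma_t=1$ and $Z_t=\tilde Z_t=\emptyset$ if $\Gamma_t=0$. Common information $H_t^0=\{X_{0:t}^0,M_{0:t}^0,Z_{0:t},\tilde Z_{0:t},U_{0:t-1}^0\}$. A feasible prescription strategy chooses, as functions of $H_t^0$, the global action $U_t^0$ and a measurable map $\rho_t$ with $U_t^1=\rho_t(X_t^1,M_t^1)$, such that all states and actions have finite second moments. *)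

From HB Require Import structures.
From mathcomp Require Import all_boot all_order all_algebra.
From mathcomp Require Import all_classical all_reals all_analysis.
Set Implicit Arguments. Unset Strict Implicit. Unset Printing Implicit Defensive.
Import Order.TTheory GRing.Theory Num.Theory.
Local Open Scope classical_set_scope.
Local Open Scope ring_scope.

Section Defs.
Context {d : measure_display} {Omega : measurableType d} {R : realType}.
Variable P : probability Omega R.

Definition sigma_gen (G : set (set Omega)) : set (set Omega) :=
  smallest (sigma_algebra setT) G.

Definition ev_vec n (X : Omega -> 'cV[R]_n) : set (set Omega) :=
  [set E | exists (i : 'I_n) (B : set R), measurable B /\
           E = (fun w => X w i ord0) @^-1` B].

Definition ev_fin (K : finType) (M : Omega -> K) : set (set Omega) :=
  [set E | exists k : K, E = M @^-1` [set k]].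

Definition ev_bool (g : Omega -> bool) : set (set Omega) :=
  [set E | E = g @^-1` [set true]].

(* events of a variable observed only when g = true
   (Z = X if g, Z = "empty" otherwise): together with ev_bool g
   these generate sigma(Z) *)
Definition ev_masked (g : Omega -> bool) (G : set (set Omega)) : set (set Omega) :=
  [set E | exists E', G E' /\ E = (g @^-1` [set true]) `&` E'].

Definition meas_vec n (X : Omega -> 'cV[R]_n) :=
  forall i : 'I_n, measurable_fun setT (fun w => X w i ord0).
Definition meas_fin (K : finType) (M : Omega -> K) :=
  forall k : K, measurable (M @^-1` [set k]).
Definition meas_bool (g : Omega -> bool) := measurable (g @^-1` [set true]).

Definition vec_meas_wrt (F : set (set Omega)) n (X : Omega -> 'cV[R]_n) :=
  forall (i : 'I_n) (B : set R), measurable B ->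
    F ((fun w => X w i ord0) @^-1` B).

Definition second_moment n (X : Omega -> 'cV[R]_n) :=
  forall i : 'I_n, P.-integrable setT (fun w => ((X w i ord0) ^+ 2)%:E).

Definition mutually_independent (I : eqType) (S : set I)
    (F : I -> set (set Omega)) :=
  forall (J : seq I) (A : I -> set Omega), uniq J ->
    (forall j, j \in J -> S j /\ F j (A j)) ->
    P [set w | forall j, j \in J -> A j w] = (\prod_(j <- J) P (A j))%E.

Definition cond_exp_version (G : set (set Omega)) (f Y : Omega -> R) :=
  [/\ (forall B : set R, measurable B -> G (Y @^-1` B)),
      P.-integrable setT (fun w => (Y w)%:E) &
      forall C, G C ->
        (\int[P]_(w in C) (Y w)%:E = \int[P]_(w in C) (f w)%:E)%E].

Definition cond_indep (G F1 F2 : set (set Omega)) :=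
  forall A B, F1 A -> F2 B ->
    exists YA YB : Omega -> R,
      [/\ cond_exp_version G (\1_A) YA,
          cond_exp_version G (\1_B) YB &
          cond_exp_version G (\1_(A `&` B)) (YA \* YB)].

(* generators of the common information
   H_t^0 = {X^0_{0:t}, M^0_{0:t}, Z_{0:t}, Zt_{0:t}, U^0_{0:t-1}} *)
Definition common_info_gen n0 n1 m0 (K0 K1 : finType)
    (X0 : nat -> Omega -> 'cV[R]_n0) (X1 : nat -> Omega -> 'cV[R]_n1)
    (M0 : nat -> Omega -> K0) (M1 : nat -> Omega -> K1)
    (Gam : nat -> Omega -> bool) (U0 : nat -> Omega -> 'cV[R]_m0)
    (t : nat) : set (set Omega) :=
  [set E | exists s, (s <= t)%N /\
     (ev_vec (X0 s) E \/ ev_fin (M0 s) E \/ ev_bool (Gam s) E \/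
      ev_masked (Gam s) (ev_vec (X1 s)) E \/
      ev_masked (Gam s) (ev_fin (M1 s)) E \/
      ((s < t)%N /\ ev_vec (U0 s) E))].

End Defs.

(* index set of the primitive random variables:
   inl (inl n)        : X_0^n
   inl (inr (n, t))   : W_t^n
   inr (inl (n, t))   : M_t^n
   inr (inr t)        : Gamma_t
   (n = false is plant 0 / global, n = true is plant 1 / local) *)
Definition prim_index : eqType := ((bool + (bool * nat)) + ((bool * nat) + nat))%type.

Section Prim.
Context {d : measure_display} {Omega : measurableType d} {R : realType}.

Definition prim_sigma n0 n1 (K0 K1 : finType)
    (X00 : Omega -> 'cV[R]_n0) (X10 : Omega -> 'cV[R]_n1)
    (W0 : nat -> Omega -> 'cV[R]_n0) (W1 : nat -> Omega -> 'cV[R]_n1)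
    (M0 : nat -> Omega -> K0) (M1 : nat -> Omega -> K1)
    (Gam : nat -> Omega -> bool) (i : prim_index) : set (set Omega) :=
  match i with
  | inl (inl false) => sigma_gen (ev_vec X00)
  | inl (inl true) => sigma_gen (ev_vec X10)
  | inl (inr (false, t)) => sigma_gen (ev_vec (W0 t))
  | inl (inr (true, t)) => sigma_gen (ev_vec (W1 t))
  | inr (inl (false, t)) => sigma_gen (ev_fin (M0 t))
  | inr (inl (true, t)) => sigma_gen (ev_fin (M1 t))
  | inr (inr t) => sigma_gen (ev_bool (Gam t))
  end.

Definition prim_upto (T : nat) : set prim_index :=
  [set i | match i with
           | inl (inl _) => True
           | inl (inr (_, t)) => (t <= T)%N
           | inr (inl (_, t)) => (t <= T)%N
           | inr (inr t) => (t <= T)%N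
           end].
End Prim.

From HB Require Import structures.
From mathcomp Require Import all_boot all_order all_algebra.
From mathcomp Require Import all_classical all_reals all_analysis.
From mathcomp Require Import measurable_realfun.
Import Order.TTheory GRing.Theory Num.Theory.
Local Open Scope classical_set_scope.
Local Open Scope ring_scope.

(* Let F be the sigma-algebra generated by all primitive variables except M_t^1.
   Along the dynamics, every state up to time t and every action before t is
   F-measurable, so every generator of H_t^0 lies in F except the events
   {Gamma_t = 1, M_t^1 = k}.  Hence off {Gamma_t = 1} the sets of H_t^0 are
   traces of sets of F, which is independent of M_t^1, while on {Gamma_t = 1}
   the mode M_t^1 is observed.  So P(M_t^1 in B | H_t^0) is 1_B(M_t^1) on
   {Gamma_t = 1} and P(M_t^1 in B) off it, and multiplying this version by
   P(X_t^1 in A | H_t^0) gives P(X_t^1 in A, M_t^1 in B | H_t^0). *)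

Ltac setsolve := apply/seteqP; split => ? /=; tauto.

Section generated_sigma_algebras.
Context {d : measure_display} {Omega : measurableType d}.
Implicit Types G : set (set Omega).

Lemma sigma_gen_setI {G X Y} : sigma_gen G X -> sigma_gen G Y -> sigma_gen G (X `&` Y).
Proof. exact: (@measurableI _ (g_sigma_algebraType G)). Qed.

Lemma sigma_gen_setC {G X} : sigma_gen G X -> sigma_gen G (~` X).
Proof. exact: (@measurableC _ (g_sigma_algebraType G)). Qed.

Lemma sigma_gen_sub {G G'} : G `<=` sigma_gen G' -> sigma_gen G `<=` sigma_gen G'.
Proof. by move=> GG'; apply: smallest_sub => //; exact: smallest_sigma_algebra. Qed.

Lemma sigma_gen_trace {G G' S} : sigma_gen G' S ->
  (forall E, G E -> sigma_gen G' (E `&` S)) ->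
  forall D, sigma_gen G D -> sigma_gen G' (D `&` S).
Proof.
move=> G'S GS; apply: smallest_sub => //; split => /=.
- by rewrite set0I; exact: (@measurable0 _ (g_sigma_algebraType G')).
- move=> D G'DS; rewrite setTD (_ : ~` D `&` S = S `&` ~` (D `&` S)); last by setsolve.
  by apply: sigma_gen_setI => //; exact: sigma_gen_setC.
- move=> D G'DS; rewrite setI_bigcupl.
  by apply: (@bigcup_measurable _ (g_sigma_algebraType G')) => k _; exact: G'DS.
Qed.

Lemma sigma_gen_measurable {G} : G `<=` measurable -> sigma_gen G `<=` measurable.
Proof. by move=> GM; apply: smallest_sub => //; exact: sigma_algebra_measurable. Qed.

Lemma sigma_gen_measurable_funP {R : realType} G (Y : Omega -> R) :
  (forall B, measurable B -> sigma_gen G (Y @^-1` B)) <->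
  measurable_fun [set: g_sigma_algebraType G] Y.
Proof.
split => [GY _ B mB|mY B mB]; first by rewrite setTI; exact: GY.
by have := mY measurableT B mB; rewrite setTI.
Qed.

End generated_sigma_algebras.


Section measurable_vectors.
Context {d : measure_display} {T : measurableType d} {R : realType}.

Lemma meas_vecP n (X : T -> 'cV[R]_n) : meas_vec X <-> vec_meas_wrt measurable X.
Proof.
split => [mX i B mB|mX i _ B mB]; last by rewrite setTI; exact: mX.
by have := mX i measurableT B mB; rewrite setTI.
Qed.

Lemma vec_meas_wrtP (F : set (set T)) n (X : T -> 'cV[R]_n) :
  vec_meas_wrt F X <-> ev_vec X `<=` F.
Proof. by split => [FX _ [i [B [mB ->]]]|XF i B mB]; [exact: FX | apply: XF; exists i, B]. Qed.

Lemma vec_meas_wrt_sub {F F' : set (set T)} {n} {X : T -> 'cV[R]_n} :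
  F `<=` F' -> vec_meas_wrt F X -> vec_meas_wrt F' X.
Proof. by move=> FF' FX i B mB; apply/FF'/FX. Qed.

Lemma meas_fin_pair (K0 K1 : finType) (M0 : T -> K0) (M1 : T -> K1) :
  meas_fin M0 -> meas_fin M1 -> meas_fin (fun w => (M0 w, M1 w)).
Proof.
move=> mM0 mM1 [k0 k1].
rewrite (_ : _ @^-1` _ = M0 @^-1` [set k0] `&` M1 @^-1` [set k1]).
  exact: measurableI.
by apply/seteqP; split => w /=; [case=> -> -> | case=> -> ->].
Qed.

Lemma measurable_fun_fin (K : finType) (M : T -> K) (g : K -> R) :
  meas_fin M -> measurable_fun setT (g \o M).
Proof.
move=> mM _ B mB; rewrite setTI.
rewrite (_ : _ @^-1` B = \bigcup_(k in [set k | B (g k)]) M @^-1` [set k]).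
  exact: fin_bigcup_measurable finite_finset _.
apply/seteqP; split => [w Bw|w [k Bk /= Mwk]]; first by exists (M w).
by rewrite /= Mwk.
Qed.

Lemma meas_vec_col_mxP {m n} {a : T -> 'cV[R]_m} {b : T -> 'cV[R]_n} :
  meas_vec (fun w => col_mx (a w) (b w)) <-> meas_vec a /\ meas_vec b.
Proof.
split => [mab|[ma mb] j].
  split => i; [apply: eq_measurable_fun (mab (lshift n i))
              |apply: eq_measurable_fun (mab (rshift m i))] => w _.
    by rewrite col_mxEu.
  by rewrite col_mxEd.
rewrite -[j](@splitK m n); case: (fintype.split j) => i /=.
  by apply: eq_measurable_fun (ma i) => w _; rewrite col_mxEu.
by apply: eq_measurable_fun (mb i) => w _; rewrite col_mxEd.
Qed.

Lemma meas_vec_switched_step {K : finType} {n m : nat} (A : K -> 'M[R]_n)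
    (B : K -> 'M[R]_(n, m)) {M : T -> K} {x y w : T -> 'cV[R]_n}
    {u : T -> 'cV[R]_m} :
  meas_fin M -> meas_vec x -> meas_vec u -> meas_vec w ->
  (forall o, y o = A (M o) *m x o + B (M o) *m u o + w o) -> meas_vec y.
Proof.
move=> mM mx mu mw yE.
have mmul k (C : K -> 'M[R]_(n, k)) (v : T -> 'cV[R]_k) :
    meas_vec v -> meas_vec (fun o => C (M o) *m v o).
  move=> mv i.
  apply: (@eq_measurable_fun _ _ _ _ _ (fun o => \sum_j C (M o) i j * v o j ord0)).
    by move=> o _; rewrite mxE.
  apply: measurable_sum => j; apply: measurable_funM (mv j).
  exact: measurable_fun_fin (fun k => C k i j) mM.
move=> i; apply: eq_measurable_fun
  (measurable_funD (measurable_funD (mmul _ A _ mx i) (mmul _ B _ mu i)) (mw i)).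
by move=> o _; rewrite yE /= !mxE.
Qed.

End measurable_vectors.

Section integral_indic.
Context {d : measure_display} {Omega : measurableType d} {R : realType}.
Variable P : probability Omega R.

Lemma integrable_mul_indic {Y : Omega -> R} {S : set Omega} : measurable S ->
  P.-integrable setT (fun w => (Y w)%:E) ->
  P.-integrable setT (fun w => (Y w * \1_S w)%:E).
Proof.
move=> mS iY; apply: (le_integrable measurableT _ _ iY).
- apply/measurable_EFinP; apply: measurable_funM; last exact: measurable_indic.
  by apply/measurable_EFinP; exact: measurable_int iY.
- move=> w _; rewrite !abse_EFin lee_fin normrM indicE.
  by case: (w \in S); rewrite ?normr1 ?normr0 ?mulr1 ?mulr0.
Qed.

Lemma integral_mul_indic (Y : Omega -> R) (S C : set Omega) :
  (\int[P]_(w in C) (Y w * \1_S w)%:E = \int[P]_(w in C `&` S) (Y w)%:E)%E.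
Proof.
rewrite integral_mkcondr; apply: eq_integral => w _.
by rewrite /patch indicE; case: (w \in S); rewrite ?mulr1 ?mulr0.
Qed.

End integral_indic.

Section cond_exp_exists.
Context {d : measure_display} {Omega : measurableType d} {R : realType}.
Variables (P : probability Omega R) (G : set (set Omega)).
Hypothesis G_measurable : sigma_gen G `<=` measurable.
Let OmegaG := g_sigma_algebraType G.

Let measurable_idG : measurable_fun [set: Omega] (id : Omega -> OmegaG).
Proof. by move=> _ C mC; rewrite setTI; exact: G_measurable. Qed.

Let idG : {mfun Omega >-> OmegaG} :=
  MeasurableFun.Pack (MeasurableFun.Class (isMeasurableFun.Build _ _ _ _ _ measurable_idG)).

Let PG := distribution P idG.

Variable f : Omega -> R.
Hypothesis intf : P.-integrable setT (fun w => (f w)%:E).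

(* The charge structure of a pushforward depends on the measurability of the
   map, which canonical-structure inference cannot supply. *)
Let nuG : {charge set OmegaG -> \bar R} :=
  ltac:(refine (pushforward (induced_charge intf) idG); exact: measurable_idG).

Let induced_charge_dominates : induced_charge intf `<< P.
Proof.
apply/null_content_dominatesP => N mN PN0; apply: null_set_integral => //.
exact: measurable_funS measurableT (@subsetT _ N) (measurable_int _ intf).
Qed.

Lemma cond_exp_exists : exists Y : Omega -> R, cond_exp_version P (sigma_gen G) f Y.
Proof.
have nuPG : nuG `<< PG by exact: dominates_pushforward.
pose D := Radon_Nikodym nuG PG.
have DE : (fun x => (fine (D x))%:E) = D.
  by apply/funext => x /=; rewrite fineK // Radon_Nikodym_fin_num.
have intD : PG.-integrable setT D by exact: Radon_Nikodym_integrable.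
have mD := measurable_int _ intD.
have intPD : P.-integrable setT (D \o idG).
  apply/integrableP; split; first exact: measurableT_comp mD measurable_idG.
  move/integrableP: intD => [_]; rewrite ge0_integral_pushforward //.
  exact: measurableT_comp.
have mY : measurable_fun setT (fine \o D).
  by apply/measurable_EFinP; rewrite -DE in mD.
exists (fine \o D); split.
- by move=> B mB; have := mY measurableT B mB; rewrite setTI.
- by rewrite DE.
- move=> C GC; rewrite DE.
  have mC := G_measurable _ GC.
  transitivity (nuG C); last by [].
  rewrite (Radon_Nikodym_integral nuPG) // integral_pushforward //.
  exact: integrableS intPD.
Qed.
End cond_exp_exists.

Lemma cond_exp_indicT {d : measure_display} {Omega : measurableType d} {R : realType}
    (P : probability Omega R) (G : set (set Omega)) :
  cond_exp_version P (sigma_gen G) (\1_setT) (cst 1).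
Proof.
split.
- apply/sigma_gen_measurable_funP; exact: measurable_cst.
- exact: finite_measure_integrable_cst.
- by move=> C _; rewrite indicT.
Qed.

(* P(B | G) when B is observed on Gam and independent of G off Gam. *)
Definition masked_cond_prob {d : measure_display} {Omega : measurableType d}
    {R : realType} (P : probability Omega R) (Gam B : set Omega) (w : Omega) : R :=
  \1_(Gam `&` B) w + fine (P B) * \1_(~` Gam) w.

Section masked_observation.
Context {d : measure_display} {Omega : measurableType d} {R : realType}.
Variables (P : probability Omega R) (G : set (set Omega)).
Hypothesis G_measurable : sigma_gen G `<=` measurable.
Context {Gam B : set Omega}.
Hypotheses (GGam : sigma_gen G Gam) (mB : measurable B) (GGamB : sigma_gen G (Gam `&` B)).

Lemma cond_exp_masked {A : set Omega} {YA : Omega -> R} : measurable A ->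
  (forall C, sigma_gen G C ->
     P (A `&` C `&` ~` Gam `&` B) = (P (A `&` C `&` ~` Gam) * P B)%E) ->
  cond_exp_version P (sigma_gen G) (\1_A) YA ->
  cond_exp_version P (sigma_gen G) (\1_(A `&` B)) (YA \* masked_cond_prob P Gam B).
Proof.
move=> mA indepB [GYA intYA intYAE].
have GnGam : sigma_gen G (~` Gam) by exact: sigma_gen_setC.
have mGam := G_measurable _ GGam.
have mnGam := G_measurable _ GnGam.
have mGamB := G_measurable _ GGamB.
have PBE : (fine (P B))%:E = P B by rewrite fineK // fin_num_measure.
have prodE : (fun w => ((YA \* masked_cond_prob P Gam B) w)%:E) =
    (fun w => (YA w * \1_(Gam `&` B) w)%:E) \+
    (fun w => (fine (P B))%:E * (YA w * \1_(~` Gam) w)%:E)%E.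
  by apply/funext => w; rewrite /masked_cond_prob /= -EFinM -EFinD mulrDr mulrCA.
have intGamB := integrable_mul_indic P mGamB intYA.
have intnGam := integrable_mul_indic P mnGam intYA.
split.
- apply/sigma_gen_measurable_funP; apply: measurable_funM.
    exact/sigma_gen_measurable_funP.
  apply: measurable_funD; first exact: measurable_indic.
  by apply: measurable_funM; [exact: measurable_cst | exact: measurable_indic].
- by rewrite prodE; apply: integrableD => //; exact: integrableZl.
move=> C GC; have mC := G_measurable _ GC.
have intC f : P.-integrable setT f -> P.-integrable C f.
  exact: integrableS measurableT mC (@subsetT _ C).
rewrite prodE integralD //; last 2 first.
- exact: intC intGamB.
- by apply: intC; exact: integrableZl.
rewrite integralZl //; last exact: intC intnGam.
rewrite !integral_mul_indic !intYAE; try exact: sigma_gen_setI.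
rewrite !integral_indic //; try exact: measurableI.
rewrite PBE muleC (_ : A `&` (C `&` ~` Gam) = A `&` C `&` ~` Gam) ?setIA //.
rewrite -indepB // [RHS](measureDI P _ mGam); last first.
  by apply: measurableI => //; exact: measurableI.
by rewrite addeC; congr (_ + _)%E; congr (P _); setsolve.
Qed.
End masked_observation.

Lemma cond_indep_masked {d : measure_display} {Omega : measurableType d} {R : realType}
    (P : probability Omega R) (G H F1 F2 : set (set Omega)) (Gam : set Omega) :
  sigma_gen G `<=` measurable -> sigma_gen H `<=` measurable ->
  F1 `<=` sigma_gen H -> F2 `<=` measurable -> sigma_gen G Gam ->
  (forall C, sigma_gen G C -> sigma_gen H (C `&` ~` Gam)) ->
  (forall B, F2 B -> sigma_gen G (Gam `&` B)) ->
  (forall B D, F2 B -> sigma_gen H D -> P (D `&` B) = (P D * P B)%E) ->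
  cond_indep P (sigma_gen G) F1 F2.
Proof.
move=> Gm Hm F1H F2m GGam traceH traceG indep A B F1A F2B.
have HA := F1H _ F1A; have mA := Hm _ HA; have mB := F2m _ F2B.
have [YA YAE] := cond_exp_exists P G Gm _ (integrable_indic P mA).
exists YA, (masked_cond_prob P Gam B); split => //.
- have := cond_exp_masked P G Gm GGam mB (traceG _ F2B) measurableT _ (cond_exp_indicT P G).
  rewrite setTI (_ : cst 1 \* _ = masked_cond_prob P Gam B); last first.
    by apply/funext => w /=; rewrite mul1r.
  by apply => C /traceH HC; rewrite setTI; exact: indep _ _ F2B HC.
- apply: (cond_exp_masked P G Gm GGam mB (traceG _ F2B) mA) => // C /traceH HC.
  by rewrite -[A `&` C `&` ~` Gam]setIA; exact: indep _ _ F2B (sigma_gen_setI HA HC).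
Qed.

Section independent_of_others.
Context {d : measure_display} {Omega : measurableType d} {R : realType}.
Variables (P : probability Omega R) (I : eqType) (S : set I).
Variable F : I -> set (set Omega).
Hypotheses (indepF : mutually_independent P S F)
  (F_measurable : forall i, F i `<=` measurable)
  (F_setI : forall i, setI_closed (F i)) (F_setT : forall i, F i setT).
Variable i0 : I.

Let inter (J : seq I) (A : I -> set Omega) := [set w | forall j, j \in J -> A j w].

Let inter_cons j J A : inter (j :: J) A = A j `&` inter J A.
Proof.
apply/seteqP; split => w /=.
  by move=> h; split => [|k kJ]; apply: h; rewrite in_cons ?eqxx ?kJ ?orbT.
by move=> [hj hJ] k; rewrite in_cons => /orP[/eqP->|/hJ].
Qed.

Let others := S `\ i0.

Let inters_others : set (set Omega) := [set D | exists J A,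
  [/\ uniq J, forall j, j \in J -> others j /\ F j (A j) & D = inter J A]].

Let inter_measurable J A : (forall j, j \in J -> F j (A j)) ->
  measurable (inter J A).
Proof.
elim: J => [_|j J IH hJ].
  by rewrite (_ : inter _ _ = setT) //; apply/seteqP; split => w.
rewrite inter_cons; apply: measurableI.
  by apply/F_measurable/hJ; rewrite mem_head.
by apply: IH => k kJ; apply: hJ; rewrite in_cons kJ orbT.
Qed.

Let inters_others_measurable : inters_others `<=` measurable.
Proof. by move=> _ [J [A [_ hJ ->]]]; apply: inter_measurable => j /hJ[]. Qed.

Let inters_others_setT : inters_others setT.
Proof. by exists [::], (fun=> setT); split => //; apply/seteqP; split => w. Qed.

Let inters_others_setI : setI_closed inters_others.
Proof.
move=> _ _ [J1 [A1 [u1 h1 ->]]] [J2 [A2 [u2 h2 ->]]].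
pose A j := (if j \in J1 then A1 j else setT) `&` (if j \in J2 then A2 j else setT).
exists (undup (J1 ++ J2)), A; split; first exact: undup_uniq.
- move=> j; rewrite mem_undup mem_cat => jJ.
  have [oj _] : others j /\ True by case/orP: jJ => [/h1|/h2] [].
  split => //; apply: F_setI.
  + by case: ifPn => [/h1[]//|_]; exact: F_setT.
  + by case: ifPn => [/h2[]//|_]; exact: F_setT.
- apply/seteqP; split => w /=.
  + move=> [H1 H2] j; rewrite mem_undup mem_cat => _.
    by split; case: ifPn => // jJ; [exact: H1 | exact: H2].
  + move=> H; split => j jJ; have := H j; rewrite mem_undup mem_cat jJ ?orbT /A jJ.
      by move=> /(_ isT) [].
    by move=> /(_ isT) [].
Qed.

Let others_sub_inters : \bigcup_(i in others) F i `<=` inters_others.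
Proof.
move=> E [i oi FiE]; exists [:: i], (fun=> E); split => //.
  by move=> j; rewrite mem_seq1 => /eqP ->.
by apply/seteqP; split => w /=; [move=> Ew j | apply; exact: mem_head].
Qed.

Variable B : set Omega.
Hypotheses (Si0 : S i0) (FB : F i0 B).

Let inters_others_indep D : inters_others D -> P (D `&` B) = (P D * P B)%E.
Proof.
move=> [J [A [uJ hJ ->]]].
have i0J : i0 \notin J by apply/negP => /hJ[[_ /= ]].
pose A' j := if j == i0 then B else A j.
have A'i0 : A' i0 = B by rewrite /A' eqxx.
have A'E : {in J, A' =1 A}.
  by move=> j jJ; rewrite /A'; case: eqP jJ => // ->; rewrite (negPf i0J).
have -> : inter J A `&` B = inter (i0 :: J) A'.
  rewrite inter_cons A'i0 setIC; congr (_ `&` _); apply/seteqP.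
  by split=> w h j jJ; [rewrite A'E | rewrite -A'E] => //; exact: h.
rewrite indepF /= ?i0J //; last first.
  move=> j; rewrite in_cons => /predU1P[->|jJ]; first by rewrite A'i0.
  by rewrite A'E //; case: (hJ j jJ) => -[].
rewrite indepF //; last by move=> j /hJ[[]].
by rewrite big_cons A'i0 muleC; congr (_ * _)%E; apply: eq_big_seq => j /A'E ->.
Qed.

Lemma mutually_independent_sigma_gen_others D :
  sigma_gen (\bigcup_(i in S `\ i0) F i) D -> P (D `&` B) = (P D * P B)%E.
Proof.
move=> /(sub_smallest2r (smallest_sigma_algebra setT inters_others) others_sub_inters) sD.
have mB := F_measurable _ _ FB.
pose PB := NngNum (fine_ge0 (measure_ge0 P B)).
have PBE : (PB%:num)%:E = P B by rewrite fineK // fin_num_measure.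
have cover : \bigcup_(k : nat) [set: Omega] = setT by rewrite bigcup_const //; exists 0%N.
have restr_scale A : inters_others A -> mrestr P mB A = mscale PB P A.
  by move=> /inters_others_indep; rewrite /mrestr /mscale PBE muleC.
have restr_fin (k : nat) : (mrestr P mB setT < +oo)%E.
  by rewrite /mrestr setTI ltey_eq fin_num_measure.
transitivity (mscale PB P D).
  exact: (g_sigma_algebra_measure_unique inters_others inters_others_measurable
    (fun=> setT) (fun=> inters_others_setT) cover
    (mrestr P mB) (mscale PB P) inters_others_setI restr_scale restr_fin D sD).
by rewrite /mscale PBE muleC.
Qed.

End independent_of_others.

Section common_information.
Context {d : measure_display} {Omega : measurableType d} {R : realType}.
Variable P : probability Omega R.
Variables (T n0 n1 m0 m1 : nat) (K0 K1 : finType).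
Variables (A : K0 -> K1 -> 'M[R]_(n0 + n1)) (B : K0 -> K1 -> 'M[R]_(n0 + n1, m0 + m1)).
Variables (X0 : nat -> Omega -> 'cV[R]_n0) (X1 : nat -> Omega -> 'cV[R]_n1)
  (U0 : nat -> Omega -> 'cV[R]_m0) (U1 : nat -> Omega -> 'cV[R]_m1)
  (W0 : nat -> Omega -> 'cV[R]_n0) (W1 : nat -> Omega -> 'cV[R]_n1)
  (M0 : nat -> Omega -> K0) (M1 : nat -> Omega -> K1) (Gam : nat -> Omega -> bool).
Hypotheses (mX00 : meas_vec (X0 0%N)) (mX10 : meas_vec (X1 0%N))
  (mW0 : forall s, meas_vec (W0 s)) (mW1 : forall s, meas_vec (W1 s))
  (mM0 : forall s, meas_fin (M0 s)) (mM1 : forall s, meas_fin (M1 s))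
  (mGam : forall s, meas_bool (Gam s)).
Hypothesis primitives_indep : mutually_independent P (prim_upto T)
  (prim_sigma (X0 0%N) (X1 0%N) W0 W1 M0 M1 Gam).
Hypothesis dynamics : forall s w, (s <= T)%N ->
  col_mx (X0 s.+1 w) (X1 s.+1 w) =
    A (M0 s w) (M1 s w) *m col_mx (X0 s w) (X1 s w)
    + B (M0 s w) (M1 s w) *m col_mx (U0 s w) (U1 s w) + col_mx (W0 s w) (W1 s w).
Hypothesis U0_common : forall s, (s <= T)%N ->
  vec_meas_wrt (sigma_gen (common_info_gen X0 X1 M0 M1 Gam U0 s)) (U0 s).
Hypothesis U1_prescribed : forall s, (s <= T)%N ->
  vec_meas_wrt (sigma_gen (common_info_gen X0 X1 M0 M1 Gam U0 s
                           `|` ev_vec (X1 s) `|` ev_fin (M1 s))) (U1 s).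
Variable t : nat.
Hypothesis tT : (t <= T)%N.

Let H s := common_info_gen X0 X1 M0 M1 Gam U0 s.
Let observed := Gam t @^-1` [set true].
Let prim := prim_sigma (X0 0%N) (X1 0%N) W0 W1 M0 M1 Gam.
Let M1t : prim_index := inr (inl (true, t)).
Let Fgen := \bigcup_(i in prim_upto T `\ M1t) prim i.
Let F := sigma_gen Fgen.

Let prim_sigma_gen i : exists E, prim i = sigma_gen E /\ E `<=` measurable.
Proof.
have vecm n (X : Omega -> 'cV[R]_n) : meas_vec X -> ev_vec X `<=` measurable.
  by move/meas_vecP/vec_meas_wrtP.
have finm (K : finType) (M : Omega -> K) : meas_fin M -> ev_fin M `<=` measurable.
  by move=> mM _ [k ->].
case: i => [[[]|[[] s]]|[[[] s]|s]]; eexists; split; try reflexivity.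
- exact: vecm mX10.
- exact: vecm mX00.
- exact: vecm (mW1 s).
- exact: vecm (mW0 s).
- exact: finm (mM1 s).
- exact: finm (mM0 s).
- by move=> _ ->; exact: mGam.
Qed.

Let prim_measurable i : prim i `<=` measurable.
Proof. by have [E [-> /sigma_gen_measurable]] := prim_sigma_gen i. Qed.

Let prim_setI i : setI_closed (prim i).
Proof. by have [E [-> _]] := prim_sigma_gen i; move=> ? ?; exact: sigma_gen_setI. Qed.

Let prim_setT i : prim i setT.
Proof.
by have [E [-> _]] := prim_sigma_gen i; exact: (@measurableT _ (g_sigma_algebraType E)).
Qed.

Let F_measurable : F `<=` measurable.
Proof. by apply: sigma_gen_measurable => E [i _ /prim_measurable]. Qed.

Let prim_sub_F i E : prim_upto T i -> i != M1t -> prim i = sigma_gen E -> E `<=` F.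
Proof.
move=> Si ne prim_i; have E_prim : E `<=` prim i.
  by rewrite prim_i; exact: sub_gen_smallest.
move=> D /E_prim primD; apply: (@sub_gen_smallest _ _ Fgen).
by exists i => //; split => //; exact/eqP.
Qed.

Let X00_F : ev_vec (X0 0%N) `<=` F.
Proof. exact: (@prim_sub_F (inl (inl false))). Qed.
Let X10_F : ev_vec (X1 0%N) `<=` F.
Proof. exact: (@prim_sub_F (inl (inl true))). Qed.
Let W0_F s : (s <= T)%N -> ev_vec (W0 s) `<=` F.
Proof. by move=> sT; apply: (@prim_sub_F (inl (inr (false, s)))). Qed.
Let W1_F s : (s <= T)%N -> ev_vec (W1 s) `<=` F.
Proof. by move=> sT; apply: (@prim_sub_F (inl (inr (true, s)))). Qed.
Let M0_F s : (s <= T)%N -> ev_fin (M0 s) `<=` F.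
Proof. by move=> sT; apply: (@prim_sub_F (inr (inl (false, s)))). Qed.
Let M1_F s : (s <= T)%N -> s != t -> ev_fin (M1 s) `<=` F.
Proof. by move=> sT st; apply: (@prim_sub_F (inr (inl (true, s)))). Qed.
Let Gam_F s : (s <= T)%N -> ev_bool (Gam s) `<=` F.
Proof. by move=> sT; apply: (@prim_sub_F (inr (inr s))). Qed.

Let F_meas_vecP n (X : Omega -> 'cV[R]_n) :
  ev_vec X `<=` F <-> @meas_vec _ (g_sigma_algebraType Fgen) R n X.
Proof. by rewrite -vec_meas_wrtP meas_vecP. Qed.

Let state_in_F s := ev_vec (X0 s) `<=` F /\ ev_vec (X1 s) `<=` F.
Let input_in_F s := ev_vec (U0 s) `<=` F /\ ev_vec (U1 s) `<=` F.

Let common_info_in_F s : (s <= t)%N ->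
  (forall r, (r <= s)%N -> state_in_F r) -> (forall r, (r < s)%N -> input_in_F r) ->
  forall E, H s E -> F E \/ (s = t /\ exists k, E = observed `&` M1 t @^-1` [set k]).
Proof.
move=> st states inputs E [r [rs hE]].
have rT : (r <= T)%N by apply: leq_trans rs (leq_trans st tT).
case: hE => [hE|[[k ->]|[->|[[E' [hE' ->]]|[[E' [[k ->] ->]]|[rs' hE]]]]]].
- by left; apply: (states r rs).1.
- by left; apply: (M0_F _ rT); exists k.
- by left; apply: (Gam_F _ rT).
- by left; apply: sigma_gen_setI; [apply: (Gam_F _ rT) | apply: (states r rs).2].
- have [rt | rt] := eqVneq r t.
    by right; split; [apply/eqP; rewrite eqn_leq st -rt rs | exists k; rewrite rt].
  by left; apply: sigma_gen_setI; [apply: (Gam_F _ rT) | apply: (M1_F _ rT rt); exists k].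
- by left; apply: (inputs r rs').1.
Qed.

Let switched_step r : (r <= T)%N -> r != t -> state_in_F r -> input_in_F r ->
  state_in_F r.+1.
Proof.
move=> rT rt [/F_meas_vecP X0r /F_meas_vecP X1r] [/F_meas_vecP U0r /F_meas_vecP U1r].
have modes : @meas_fin _ (g_sigma_algebraType Fgen) _ (fun w => (M0 r w, M1 r w)).
  by apply: meas_fin_pair => k; [apply: (M0_F _ rT) | apply: (M1_F _ rT rt)]; exists k.
have [/F_meas_vecP W0r /F_meas_vecP W1r] := (W0_F _ rT, W1_F _ rT).
have := meas_vec_switched_step (fun k => A k.1 k.2) (fun k => B k.1 k.2) modes
  (meas_vec_col_mxP.2 (conj X0r X1r)) (meas_vec_col_mxP.2 (conj U0r U1r))
  (meas_vec_col_mxP.2 (conj W0r W1r)) (fun w => dynamics r w rT).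
by move=> /meas_vec_col_mxP[/F_meas_vecP ? /F_meas_vecP ?].
Qed.

Let states_inputs_in_F s : (s <= t)%N -> state_in_F s /\ ((s < t)%N -> input_in_F s).
Proof.
elim/ltn_ind: s => s IH st.
have state_s : state_in_F s.
  case: s IH st => [_ _|r IH st]; first by split; [exact: X00_F | exact: X10_F].
  have [state_r /(_ st) input_r] := IH r (ltnSn r) (ltnW st).
  by apply: switched_step => //; [exact: leq_trans (ltnW st) tT | rewrite ltn_eqF].
split => // s_lt_t; have sT : (s <= T)%N by exact: leq_trans (ltnW s_lt_t) tT.
have IH' r : (r < s)%N -> state_in_F r /\ input_in_F r.
  move=> rs; have rt := ltn_trans rs s_lt_t.
  by have [? /(_ rt)] := IH r rs (ltnW rt).
have states r : (r <= s)%N -> state_in_F r.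
  by rewrite leq_eqVlt => /predU1P[-> //|/IH'[]].
have H_F : H s `<=` F.
  have inputs r : (r < s)%N -> input_in_F r by move=> /IH'[].
  move=> E HE.
  have [//|[st' _]] := common_info_in_F _ (ltnW s_lt_t) states inputs _ HE.
  by move: s_lt_t; rewrite st' ltnn.
split; apply/vec_meas_wrtP.
- exact: vec_meas_wrt_sub (sigma_gen_sub H_F) (U0_common _ sT).
- apply: (vec_meas_wrt_sub _ (U1_prescribed _ sT)); apply: sigma_gen_sub.
  move=> E [[/H_F //|]|[k ->]]; first exact: state_s.2.
  by apply: (M1_F _ sT (negbT (ltn_eqF s_lt_t))); exists k.
Qed.

Lemma cond_indep_local_common_info :
  cond_indep P (sigma_gen (H t)) (sigma_gen (ev_vec (X1 t))) (sigma_gen (ev_fin (M1 t))).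
Proof.
have [[_ X1t_F] _] := states_inputs_in_F _ (leqnn t).
have H_F E : H t E -> F E \/ exists k, E = observed `&` M1 t @^-1` [set k].
  move=> HE; have [|[_ ?]] := common_info_in_F _ (leqnn t)
    (fun r rt => (states_inputs_in_F _ rt).1)
    (fun r rt => (states_inputs_in_F _ (ltnW rt)).2 rt) _ HE; by [left | right].
have observed_F : F observed by apply: (Gam_F _ tT).
have observed_H : sigma_gen (H t) observed.
  by apply: sub_gen_smallest; exists t; split => //; do 2 right; left.
apply: (@cond_indep_masked _ _ _ P _ Fgen _ _ observed) => //.
- apply: sigma_gen_measurable => E /H_F [/F_measurable //|[k ->]].
  exact: measurableI (mGam t) (mM1 t k).
- exact: sigma_gen_sub X1t_F.
- by apply: sigma_gen_measurable => _ [k ->]; exact: mM1.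
- apply: sigma_gen_trace; first exact: sigma_gen_setC.
  move=> E /H_F [FE|[k ->]]; first by apply: sigma_gen_setI => //; exact: sigma_gen_setC.
  rewrite (_ : _ `&` _ = set0); first exact: (@measurable0 _ (g_sigma_algebraType Fgen)).
  by apply/seteqP; split => w // [[]].
- move=> E ME; rewrite setIC; apply: sigma_gen_trace ME => // _ [k ->].
  apply: sub_gen_smallest; exists t; split => //; do 4 right; left.
  by exists (M1 t @^-1` [set k]); split; [exists k | rewrite setIC].
- move=> E D ME FD.
  exact: (mutually_independent_sigma_gen_others _ _ _ _ primitives_indep
    prim_measurable prim_setI prim_setT M1t E tT ME D FD).
Qed.

End common_information.

Theorem lemma3 (R : realType) (d : measure_display) (Omega : measurableType d)
  (P : probability Omega R)
  (T n0 n1 m0 m1 : nat) (K0 K1 : finType)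
  (A : K0 -> K1 -> 'M[R]_(n0 + n1)) (B : K0 -> K1 -> 'M[R]_(n0 + n1, m0 + m1))
  (X0 : nat -> Omega -> 'cV[R]_n0) (X1 : nat -> Omega -> 'cV[R]_n1)
  (U0 : nat -> Omega -> 'cV[R]_m0) (U1 : nat -> Omega -> 'cV[R]_m1)
  (W0 : nat -> Omega -> 'cV[R]_n0) (W1 : nat -> Omega -> 'cV[R]_n1)
  (M0 : nat -> Omega -> K0) (M1 : nat -> Omega -> K1)
  (Gam : nat -> Omega -> bool) (p : R) :
  (* primitive random variables are measurable *)
  meas_vec (X0 0%N) -> meas_vec (X1 0%N) ->
  (forall t, meas_vec (W0 t)) -> (forall t, meas_vec (W1 t)) ->
  (forall t, meas_fin (M0 t)) -> (forall t, meas_fin (M1 t)) ->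
  (forall t, meas_bool (Gam t)) ->
  (* X_0^n, W_t^n, M_t^n, Gamma_t are mutually independent *)
  mutually_independent P (prim_upto T)
    (prim_sigma (X0 0%N) (X1 0%N) W0 W1 M0 M1 Gam) ->
  (* Gamma_t i.i.d. Bernoulli(p) *)
  0 <= p <= 1 ->
  (forall t, (t <= T)%N -> P (Gam t @^-1` [set true]) = p%:E) ->
  (* switched linear dynamics *)
  (forall t w, (t <= T)%N ->
     col_mx (X0 t.+1 w) (X1 t.+1 w) =
       A (M0 t w) (M1 t w) *m col_mx (X0 t w) (X1 t w)
       + B (M0 t w) (M1 t w) *m col_mx (U0 t w) (U1 t w)
       + col_mx (W0 t w) (W1 t w)) ->
  (* feasible prescription strategy: U_t^0 is a function of H_t^0, and
     U_t^1 = rho_t(X_t^1, M_t^1) with rho_t a function of H_t^0 *)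
  (forall t, (t <= T)%N ->
     vec_meas_wrt (sigma_gen (common_info_gen X0 X1 M0 M1 Gam U0 t)) (U0 t)) ->
  (forall t, (t <= T)%N ->
     vec_meas_wrt (sigma_gen (common_info_gen X0 X1 M0 M1 Gam U0 t
                              `|` ev_vec (X1 t) `|` ev_fin (M1 t))) (U1 t)) ->
  (* finite second moments of all states and actions *)
  (forall t, (t <= T.+1)%N -> second_moment P (X0 t) /\ second_moment P (X1 t)) ->
  (forall t, (t <= T)%N -> second_moment P (U0 t) /\ second_moment P (U1 t)) ->
  (* conclusion *)
  forall t, (t <= T)%N ->
    cond_indep P (sigma_gen (common_info_gen X0 X1 M0 M1 Gam U0 t))
      (sigma_gen (ev_vec (X1 t))) (sigma_gen (ev_fin (M1 t))).
Proof.
move=> mX00 mX10 mW0 mW1 mM0 mM1 mGam indep _ _ dynamics U0_common U1_prescribed _ _ t tT.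
exact: (cond_indep_local_common_info P T n0 n1 m0 m1 K0 K1 A B X0 X1 U0 U1 W0 W1
  M0 M1 Gam mX00 mX10 mW0 mW1 mM0 mM1 mGam indep dynamics U0_common U1_prescribed t tT).
Qed.
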